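(* Let $X$ be a compact metric space, $f:X\dashrightarrow X$ a continuous open-dense defined map and $0\ne\mu_0\in SM^+(X)$. 1) If $\mu$ is a weak cluster point of the Cesàro averages $\mu_n=\frac1n\sum_{j=0}^n(f_* )^j(\mu_0)$, then $f_*(\mu)\ge\mu$. 2) If $f_*(\mu_0)\le\mu_0$, then $(f_* )^n(\mu_0)$ converges weakly to some $\mu_\infty\in SM^+(X)$, and $\mu_\infty$ is the largest element of the (non-empty) set $\{\mu\in SM^+(X):\mu\le\mu_0,\ f_*(\mu)=\mu\}$. 3) If $f_*(\mu_0)\ge\mu_0$, then the set $\{\mu\in SM^+(X):\mu\ge\mu_0,\ f_*(\mu)=\mu\}$ is non-empty and has a smallest element.
   Context: Positive strong submeasure on $X$: a map $\mu:C^0(X)\to\mathbb{R}$ that is sub-linear ($\mu(\varphi_1+\varphi_2)\le\mu(\varphi_1)+\mu(\varphi_2)$, $\mu(\lambda\varphi)=\lambda\mu(\varphi)$ for $\lambda\ge0$), bounded ($|\mu(\varphi)|\le C\|\varphi\|_{L^\infty}$) and non-decreasing; $SM^+(X)$ is the set of these. $\mu\le\nu$ means $\mu(\varphi)\le\nu(\varphi)$ for all $\varphi$. Weak convergence: uniformly bounded norms and pointwise convergence on $C^0(X)$. A continuous open-dense defined map $f:X\dashrightarrow X$ is a continuous map $f:\mathrm{OpenDom}(f)\to X$ with $\mathrm{OpenDom}(f)$ open dense in $X$. For $\varphi\in C^0(X)$, $f^*(\varphi):=E(\varphi\circ f)$ where for bounded $g$ on an open dense $U$, $E(g)=g$ on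 $U$ and $E(g)(x)=\limsup_{y\in U,y\to x}g(y)$ off $U$. Pushforward: $f_*(\mu)(\varphi):=\inf\{\mu(\psi):\psi\in C^0(X),\ \psi\ge f^*(\varphi)\}$; $(f_* )^j$ denotes the $j$-fold iterate of the operator $f_*$. *)

From Stdlib Require Import Reals Classical ClassicalEpsilon.
Open Scope R_scope.

Record CompactMetricSpace := {
  cm_carrier :> Type;
  cm_dist : cm_carrier -> cm_carrier -> R;
  cm_dist_nonneg : forall x y, 0 <= cm_dist x y;
  cm_dist_eq0 : forall x y, cm_dist x y = 0 <-> x = y;
  cm_dist_sym : forall x y, cm_dist x y = cm_dist y x;
  cm_dist_tri : forall x y z, cm_dist x z <= cm_dist x y + cm_dist y z;
  cm_compact : forall u : nat -> cm_carrier,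
      exists (s : nat -> nat) (l : cm_carrier),
        (forall n, (s n < s (S n))%nat) /\
        forall eps, eps > 0 -> exists N, forall n, (n >= N)%nat ->
          cm_dist (u (s n)) l < eps
}.

Section Defs.
Variable X : CompactMetricSpace.
Notation d := (cm_dist X).

Definition cont (phi : X -> R) : Prop :=
  forall x eps, eps > 0 -> exists delta, delta > 0 /\
    forall y, d x y < delta -> Rabs (phi y - phi x) < eps.

(** continuous open-dense defined maps  f : OpenDom(f) -> X ;
    represented by the domain U and a total function whose values
    outside U are irrelevant *)
Definition open_set (U : X -> Prop) : Prop :=
  forall x, U x -> exists r, r > 0 /\ forall y, d x y < r -> U y.
Definition dense_set (U : X -> Prop) : Prop :=
  forall x eps, eps > 0 -> exists y, U y /\ d x y < eps.
Definition cont_on (U : X -> Prop) (f : X -> X) : Prop :=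
  forall x, U x -> forall eps, eps > 0 -> exists delta, delta > 0 /\
    forall y, U y -> d x y < delta -> d (f y) (f x) < eps.
Definition open_dense_map (U : X -> Prop) (f : X -> X) : Prop :=
  open_set U /\ dense_set U /\ cont_on U f.

(** sup / inf of a set of reals (meaningful when they exist) *)
Definition is_glb (E : R -> Prop) (l : R) : Prop :=
  (forall r, E r -> l <= r) /\ (forall b, (forall r, E r -> b <= r) -> b <= l).
Definition Rsup (E : R -> Prop) : R := epsilon (inhabits 0) (fun l => is_lub E l).
Definition Rinf (E : R -> Prop) : R := epsilon (inhabits 0) (fun l => is_glb E l).

Definition limsup_in (U : X -> Prop) (g : X -> R) (x : X) : R :=
  Rinf (fun s => exists delta, delta > 0 /\
          s = Rsup (fun r => exists y, U y /\ d y x < delta /\ r = g y)).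
Definition extE (U : X -> Prop) (g : X -> R) : X -> R :=
  fun x => if excluded_middle_informative (U x) then g x else limsup_in U g x.

Definition pullback (U : X -> Prop) (f : X -> X) (phi : X -> R) : X -> R :=
  extE U (fun x => phi (f x)).

(** functionals on C^0(X): only values on continuous functions matter *)
Definition functional := (X -> R) -> R.

Definition pushforward (U : X -> Prop) (f : X -> X) (mu : functional) : functional :=
  fun phi => Rinf (fun r => exists psi, cont psi /\
                     (forall x, psi x >= pullback U f phi x) /\ r = mu psi).

(** |mu(phi)| <= C ||phi||_infty, written with an arbitrary bound M >= ||phi||_infty *)
Definition bounded_by (C : R) (mu : functional) : Prop :=
  forall phi, cont phi -> forall M, (forall x, Rabs (phi x) <= M) ->
    Rabs (mu phi) <= C * M.

Definition SMplus (mu : functional) : Prop :=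
  (forall phi1 phi2, cont phi1 -> cont phi2 ->
      mu (fun x => phi1 x + phi2 x) <= mu phi1 + mu phi2) /\
  (forall lam phi, lam >= 0 -> cont phi -> mu (fun x => lam * phi x) = lam * mu phi) /\
  (exists C, bounded_by C mu) /\
  (forall phi1 phi2, cont phi1 -> cont phi2 -> (forall x, phi1 x <= phi2 x) ->
      mu phi1 <= mu phi2).

Definition mle (mu nu : functional) : Prop := forall phi, cont phi -> mu phi <= nu phi.
Definition meq (mu nu : functional) : Prop := forall phi, cont phi -> mu phi = nu phi.
Definition mnonzero (mu : functional) : Prop := exists phi, cont phi /\ mu phi <> 0.

Definition weak_conv (nu : nat -> functional) (mu : functional) : Prop :=
  (exists C, forall n, bounded_by C (nu n)) /\
  forall phi, cont phi -> Un_cv (fun n => nu n phi) (mu phi).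

Definition weak_cluster (nu : nat -> functional) (mu : functional) : Prop :=
  exists s : nat -> nat, (forall n, (s n < s (S n))%nat) /\
    weak_conv (fun n => nu (s n)) mu.

Definition push_iter (U : X -> Prop) (f : X -> X) (j : nat) (mu : functional) : functional :=
  Nat.iter j (pushforward U f) mu.

Definition cesaro (U : X -> Prop) (f : X -> X) (mu0 : functional) (n : nat) : functional :=
  fun phi => (/ INR n) * sum_f_R0 (fun j => push_iter U f j mu0 phi) n.

End Defs.

(* The pushforward [f_*] is monotone and maps [SM^+(X)] into itself with the same
   bound, because the limsup extension [E] is monotone, subadditive and positively
   homogeneous. For 1), if [psi >= f^* phi] then [(f_* )^(j+1) mu0 phi <= (f_* )^j mu0 psi],
   so the Cesaro averages at [phi] and [psi] differ by a telescoping sum of order [1/n].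
   For 2), the iterates decrease, hence converge pointwise to their infimum, which is
   [f_*]-invariant and dominates every fixed point below [mu0]. For 3), consider the
   submeasures [mu >= mu0] with [mu <= f_* mu] lying below every fixed point above [mu0]:
   their supremum [m] belongs to this family and so does [f_* m], hence [m = f_* m]. *)

From Stdlib Require Import Reals Classical ClassicalEpsilon.
From Stdlib Require Import Lra Lia FunctionalExtensionality.
Open Scope R_scope.

Lemma Rabs_le_between a b : Rabs a <= b -> - b <= a <= b.
Proof. unfold Rabs; destruct (Rcase_abs a); intros; lra. Qed.

Lemma Un_cv_const (c : R) : Un_cv (fun _ => c) c.
Proof.
  intros eps Heps; exists 0%nat; intros n _.
  unfold R_dist; rewrite Rminus_diag, Rabs_R0; exact Heps.
Qed.

Lemma strictly_increasing_ge_id (s : nat -> nat) :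
  (forall n, (s n < s (S n))%nat) -> forall n, (n <= s n)%nat.
Proof. intros Hs n; induction n as [| n IH]; [lia | specialize (Hs n); lia]. Qed.

Lemma Rinv_INR_nonneg n : 0 <= / INR n.
Proof.
  destruct n as [| n]; [rewrite INR_0, Rinv_0; lra |].
  left; apply Rinv_0_lt_compat, lt_0_INR; lia.
Qed.

Lemma cv_infty_INR_subseq (s : nat -> nat) :
  (forall n, (s n < s (S n))%nat) -> cv_infty (fun n => INR (s n)).
Proof.
  intros Hs A; destruct (INR_unbounded A) as [N HN]; exists N; intros n Hn.
  pose proof (strictly_increasing_ge_id s Hs n).
  apply Rlt_le_trans with (INR N); [exact HN | apply le_INR; lia].
Qed.

Lemma is_lub_Rsup (E : R -> Prop) :
  (exists r, E r) -> (exists b, forall r, E r -> r <= b) -> is_lub E (Rsup E).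
Proof.
  intros Hne Hub; unfold Rsup; apply epsilon_spec.
  destruct (completeness E) as [m Hm]; [exact Hub | exact Hne | now exists m].
Qed.

Lemma is_glb_Rinf (E : R -> Prop) :
  (exists r, E r) -> (exists b, forall r, E r -> b <= r) -> is_glb E (Rinf E).
Proof.
  intros [r Hr] [b Hb]; unfold Rinf; apply epsilon_spec.
  destruct (completeness (fun x => E (- x))) as [m [Hub Hleast]].
  - exists (- b); intros x Hx; specialize (Hb _ Hx); lra.
  - exists (- r); now rewrite Ropp_involutive.
  - exists (- m); split.
    + intros s Hs; enough (- s <= m) by lra.
      apply Hub; now rewrite Ropp_involutive.
    + intros c Hc; enough (m <= - c) by lra.
      apply Hleast; intros x Hx; specialize (Hc _ Hx); lra.
Qed.

Lemma lub_upper E l r : is_lub E l -> E r -> r <= l.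
Proof. intros [H _]; auto. Qed.

Lemma lub_least E l b : is_lub E l -> (forall r, E r -> r <= b) -> l <= b.
Proof. intros [_ H]; auto. Qed.

Lemma glb_lower E l r : is_glb E l -> E r -> l <= r.
Proof. intros [H _]; auto. Qed.

Lemma glb_greatest E l b : is_glb E l -> (forall r, E r -> b <= r) -> b <= l.
Proof. intros [_ H]; auto. Qed.

Lemma glb_approx E l eps : is_glb E l -> eps > 0 -> exists r, E r /\ r < l + eps.
Proof.
  intros Hglb Heps; apply NNPP; intros Hnone.
  enough (l + eps <= l) by lra.
  apply (glb_greatest E); [exact Hglb |]; intros r Hr.
  apply Rnot_lt_le; intros Hlt; apply Hnone; now exists r.
Qed.

Section ContinuousFunctions.
Variable X : CompactMetricSpace.

Lemma cont_const (c : R) : cont X (fun _ => c).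
Proof.
  intros x eps Heps; exists 1; split; [lra |]; intros y _.
  rewrite Rminus_diag, Rabs_R0; exact Heps.
Qed.

Lemma cont_plus (p q : X -> R) : cont X p -> cont X q -> cont X (fun x => p x + q x).
Proof.
  intros Hp Hq x eps Heps.
  destruct (Hp x (eps / 2)) as [d1 [Hd1 H1]]; [lra |].
  destruct (Hq x (eps / 2)) as [d2 [Hd2 H2]]; [lra |].
  exists (Rmin d1 d2); split; [now apply Rmin_Rgt_r |]; intros y Hy.
  specialize (H1 y (Rlt_le_trans _ _ _ Hy (Rmin_l _ _))).
  specialize (H2 y (Rlt_le_trans _ _ _ Hy (Rmin_r _ _))).
  replace (p y + q y - (p x + q x)) with ((p y - p x) + (q y - q x)) by ring.
  eapply Rle_lt_trans; [apply Rabs_triang | lra].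
Qed.

Lemma cont_scal (l : R) (p : X -> R) : cont X p -> cont X (fun x => l * p x).
Proof.
  intros Hp x eps Heps.
  pose proof (Rabs_pos l) as Hl.
  destruct (Hp x (eps / (Rabs l + 1))) as [dl [Hdl H]].
  { apply Rdiv_lt_0_compat; lra. }
  exists dl; split; [exact Hdl |]; intros y Hy; specialize (H y Hy).
  rewrite <- Rmult_minus_distr_l, Rabs_mult.
  apply Rle_lt_trans with (Rabs l * (eps / (Rabs l + 1))).
  - apply Rmult_le_compat_l; lra.
  - apply (Rmult_lt_reg_r (Rabs l + 1)); [lra |].
    field_simplify; [nra | lra].
Qed.

(* An unbounded continuous function would blow up along a convergent subsequence. *)
Lemma cont_bounded (phi : X -> R) : cont X phi -> exists M, forall x, Rabs (phi x) <= M.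
Proof.
  intros Hc; apply NNPP; intros Hunb.
  assert (Hbig : forall n : nat, exists x, INR n < Rabs (phi x)).
  { intros n; apply NNPP; intros Hn; apply Hunb; exists (INR n); intros x.
    apply Rnot_lt_le; intros Hx; apply Hn; now exists x. }
  destruct (choice _ Hbig) as [u Hu].
  destruct (cm_compact X u) as [s [l [Hs Hl]]].
  destruct (Hc l 1 Rlt_0_1) as [dl [Hdl Hnear]].
  destruct (Hl dl Hdl) as [N HN].
  destruct (INR_unbounded (Rabs (phi l) + 1)) as [k Hk].
  pose proof (strictly_increasing_ge_id s Hs) as Hsn.
  set (n := (N + k)%nat).
  assert (Hclose : Rabs (phi (u (s n)) - phi l) < 1).
  { apply Hnear; rewrite cm_dist_sym; apply HN; unfold n; lia. }
  assert (Hk_le : INR k <= INR (s n)) by (apply le_INR; specialize (Hsn n); unfold n in *; lia).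
  pose proof (Hu (s n)).
  pose proof (Rabs_triang_inv (phi (u (s n))) (phi l)).
  lra.
Qed.

End ContinuousFunctions.

Section LimsupExtension.
Variable X : CompactMetricSpace.
Variable U : X -> Prop.
Hypothesis U_dense : dense_set X U.

Definition ball_values (g : X -> R) (x : X) (dl : R) : R -> Prop :=
  fun r => exists y, U y /\ cm_dist X y x < dl /\ r = g y.

Definition ball_sup (g : X -> R) (x : X) (dl : R) : R := Rsup (ball_values g x dl).

Definition ball_sups (g : X -> R) (x : X) : R -> Prop :=
  fun s => exists dl, dl > 0 /\ s = ball_sup g x dl.

Definition bounded_on (g : X -> R) : Prop := exists M, forall y, U y -> Rabs (g y) <= M.

Lemma ball_values_inhabited g x dl : dl > 0 -> exists r, ball_values g x dl r.
Proof.
  intros Hdl; destruct (U_dense x dl Hdl) as [y [Hy Hxy]].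
  exists (g y), y; rewrite cm_dist_sym; auto.
Qed.

Lemma is_lub_ball_sup g x dl :
  bounded_on g -> dl > 0 -> is_lub (ball_values g x dl) (ball_sup g x dl).
Proof.
  intros [M HM] Hdl; apply is_lub_Rsup; [now apply ball_values_inhabited |].
  exists M; intros r [y [Hy [_ ->]]]; exact (Rle_trans _ _ _ (Rle_abs _) (HM y Hy)).
Qed.

Lemma le_ball_sup g x dl y :
  bounded_on g -> dl > 0 -> U y -> cm_dist X y x < dl -> g y <= ball_sup g x dl.
Proof.
  intros Hg Hdl Hy Hyx; apply (lub_upper _ _ _ (is_lub_ball_sup g x dl Hg Hdl)).
  now exists y.
Qed.

Lemma ball_sup_lower_bound g x dl M :
  (forall y, U y -> Rabs (g y) <= M) -> dl > 0 -> - M <= ball_sup g x dl.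
Proof.
  intros HM Hdl; destruct (ball_values_inhabited g x dl Hdl) as [r [y [Hy [Hyx ->]]]].
  pose proof (Rabs_le_between _ _ (HM y Hy)).
  pose proof (le_ball_sup g x dl y (ex_intro _ M HM) Hdl Hy Hyx); lra.
Qed.

Lemma is_glb_limsup g x : bounded_on g -> is_glb (ball_sups g x) (limsup_in X U g x).
Proof.
  intros Hg; pose proof Hg as [M HM]; apply is_glb_Rinf.
  - exists (ball_sup g x 1), 1; split; [lra | reflexivity].
  - exists (- M); intros r [dl [Hdl ->]]; now apply ball_sup_lower_bound.
Qed.

Lemma limsup_le_of_ball g x c dl :
  bounded_on g -> dl > 0 -> (forall y, U y -> cm_dist X y x < dl -> g y <= c) ->
  limsup_in X U g x <= c.
Proof.
  intros Hg Hdl Hc; apply Rle_trans with (ball_sup g x dl).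
  - apply (glb_lower _ _ _ (is_glb_limsup g x Hg)); now exists dl.
  - apply (lub_least _ _ _ (is_lub_ball_sup g x dl Hg Hdl)); intros r [y [Hy [Hyx ->]]]; auto.
Qed.

Lemma extE_bound g x M : (forall y, U y -> Rabs (g y) <= M) -> Rabs (extE X U g x) <= M.
Proof.
  intros HM; unfold extE; destruct (excluded_middle_informative (U x)) as [Hx | Hx]; [auto |].
  assert (Hg : bounded_on g) by now exists M.
  apply Rabs_le; split.
  - apply (glb_greatest _ _ _ (is_glb_limsup g x Hg)); intros r [dl [Hdl ->]].
    now apply ball_sup_lower_bound.
  - apply (limsup_le_of_ball g x M 1 Hg); [lra |]; intros y Hy _.
    exact (Rle_trans _ _ _ (Rle_abs _) (HM y Hy)).
Qed.

Lemma extE_mono g1 g2 x : bounded_on g1 -> bounded_on g2 ->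
  (forall y, U y -> g1 y <= g2 y) -> extE X U g1 x <= extE X U g2 x.
Proof.
  intros Hg1 Hg2 H12; unfold extE.
  destruct (excluded_middle_informative (U x)) as [Hx | Hx]; [auto |].
  apply (glb_greatest _ _ _ (is_glb_limsup g2 x Hg2)); intros r [dl [Hdl ->]].
  apply (limsup_le_of_ball g1 x _ dl Hg1 Hdl); intros y Hy Hyx.
  apply Rle_trans with (g2 y); [auto | now apply le_ball_sup].
Qed.

Lemma extE_add g1 g2 x : bounded_on g1 -> bounded_on g2 ->
  extE X U (fun y => g1 y + g2 y) x <= extE X U g1 x + extE X U g2 x.
Proof.
  intros Hg1 Hg2; unfold extE.
  destruct (excluded_middle_informative (U x)) as [Hx | Hx]; [lra |].
  assert (Hg12 : bounded_on (fun y => g1 y + g2 y)).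
  { destruct Hg1 as [M1 H1], Hg2 as [M2 H2]; exists (M1 + M2); intros y Hy.
    eapply Rle_trans; [apply Rabs_triang | specialize (H1 y Hy); specialize (H2 y Hy); lra]. }
  assert (Hballs : forall d1 d2, d1 > 0 -> d2 > 0 ->
    limsup_in X U (fun y => g1 y + g2 y) x <= ball_sup g1 x d1 + ball_sup g2 x d2).
  { intros d1 d2 Hd1 Hd2.
    apply (limsup_le_of_ball _ x _ (Rmin d1 d2) Hg12); [now apply Rmin_Rgt_r |].
    intros y Hy Hyx; apply Rplus_le_compat; apply le_ball_sup; auto.
    - exact (Rlt_le_trans _ _ _ Hyx (Rmin_l _ _)).
    - exact (Rlt_le_trans _ _ _ Hyx (Rmin_r _ _)). }
  enough (limsup_in X U (fun y => g1 y + g2 y) x - limsup_in X U g1 x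
          <= limsup_in X U g2 x) by lra.
  apply (glb_greatest _ _ _ (is_glb_limsup g2 x Hg2)); intros r2 [d2 [Hd2 ->]].
  enough (limsup_in X U (fun y => g1 y + g2 y) x - ball_sup g2 x d2
          <= limsup_in X U g1 x) by lra.
  apply (glb_greatest _ _ _ (is_glb_limsup g1 x Hg1)); intros r1 [d1 [Hd1 ->]].
  specialize (Hballs d1 d2 Hd1 Hd2); lra.
Qed.

Lemma extE_scale l g x : l > 0 -> bounded_on g ->
  extE X U (fun y => l * g y) x <= l * extE X U g x.
Proof.
  intros Hl Hg; unfold extE.
  destruct (excluded_middle_informative (U x)) as [Hx | Hx]; [lra |].
  assert (Hlg : bounded_on (fun y => l * g y)).
  { destruct Hg as [M HM]; exists (Rabs l * M); intros y Hy.
    rewrite Rabs_mult; apply Rmult_le_compat_l; [apply Rabs_pos | auto]. }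
  enough (/ l * limsup_in X U (fun y => l * g y) x <= limsup_in X U g x).
  { apply (Rmult_le_compat_l l) in H; [| lra].
    rewrite <- Rmult_assoc, Rinv_r, Rmult_1_l in H; lra. }
  apply (glb_greatest _ _ _ (is_glb_limsup g x Hg)); intros r [dl [Hdl ->]].
  enough (limsup_in X U (fun y => l * g y) x <= l * ball_sup g x dl).
  { apply (Rmult_le_compat_l (/ l)) in H; [| left; now apply Rinv_0_lt_compat].
    rewrite <- Rmult_assoc, Rinv_l, Rmult_1_l in H; lra. }
  apply (limsup_le_of_ball _ x _ dl Hlg Hdl); intros y Hy Hyx.
  apply Rmult_le_compat_l; [lra | now apply le_ball_sup].
Qed.

End LimsupExtension.

Section Pushforward.
Variable X : CompactMetricSpace.
Variable U : X -> Prop.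
Variable f : X -> X.
Hypothesis U_dense : dense_set X U.

Lemma bounded_on_comp (phi : X -> R) : cont X phi -> bounded_on X U (fun y => phi (f y)).
Proof. intros Hphi; destruct (cont_bounded X phi Hphi) as [M HM]; now exists M. Qed.

Lemma pullback_bound phi x M :
  (forall y, Rabs (phi y) <= M) -> Rabs (pullback X U f phi x) <= M.
Proof. intros HM; apply extE_bound; auto. Qed.

Lemma pullback_mono p q x : cont X p -> cont X q ->
  (forall y, p y <= q y) -> pullback X U f p x <= pullback X U f q x.
Proof. intros Hp Hq Hpq; apply extE_mono; auto using bounded_on_comp. Qed.

Lemma pullback_add p q x : cont X p -> cont X q ->
  pullback X U f (fun y => p y + q y) x <= pullback X U f p x + pullback X U f q x.
Proof.
  intros Hp Hq; apply (extE_add X U U_dense (fun y => p (f y)) (fun y => q (f y)));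
    auto using bounded_on_comp.
Qed.

Lemma pullback_scale l p x : l > 0 -> cont X p ->
  pullback X U f (fun y => l * p y) x <= l * pullback X U f p x.
Proof.
  intros Hl Hp; apply (extE_scale X U U_dense l (fun y => p (f y)));
    auto using bounded_on_comp.
Qed.

Lemma is_glb_pushforward (mu : functional X) phi c : cont X phi ->
  (forall psi, cont X psi -> (forall x, psi x >= pullback X U f phi x) -> c <= mu psi) ->
  is_glb (fun r => exists psi, cont X psi /\
            (forall x, psi x >= pullback X U f phi x) /\ r = mu psi)
         (pushforward X U f mu phi).
Proof.
  intros Hphi Hc; apply is_glb_Rinf.
  - destruct (cont_bounded X phi Hphi) as [M HM].
    exists (mu (fun _ => M)), (fun _ => M); split; [apply cont_const |]; split; [| reflexivity].
    intros x; pose proof (Rabs_le_between _ _ (pullback_bound phi x M HM)); lra.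
  - exists c; intros r [psi [Hpsi [Hge ->]]]; auto.
Qed.

Lemma pushforward_ge (mu : functional X) phi c : cont X phi ->
  (forall psi, cont X psi -> (forall x, psi x >= pullback X U f phi x) -> c <= mu psi) ->
  c <= pushforward X U f mu phi.
Proof.
  intros Hphi Hc; apply (glb_greatest _ _ _ (is_glb_pushforward mu phi c Hphi Hc)).
  intros r [psi [Hpsi [Hge ->]]]; auto.
Qed.

Lemma pushforward_le (mu : functional X) phi psi : SMplus X mu -> cont X phi -> cont X psi ->
  (forall x, psi x >= pullback X U f phi x) -> pushforward X U f mu phi <= mu psi.
Proof.
  intros [_ [_ [_ Hmono]]] Hphi Hpsi Hge.
  destruct (cont_bounded X phi Hphi) as [M HM].
  refine (glb_lower _ _ _ (is_glb_pushforward mu phi (mu (fun _ => - M)) Hphi _) _).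
  - intros chi Hchi Hchi_ge; apply Hmono; [apply cont_const | exact Hchi |]; intros x.
    pose proof (Rabs_le_between _ _ (pullback_bound phi x M HM)); specialize (Hchi_ge x); lra.
  - now exists psi.
Qed.

Lemma pushforward_mono (mu nu : functional X) : SMplus X mu ->
  mle X mu nu -> mle X (pushforward X U f mu) (pushforward X U f nu).
Proof.
  intros Hmu Hle phi Hphi; apply pushforward_ge; [exact Hphi |]; intros psi Hpsi Hge.
  apply Rle_trans with (mu psi); [now apply pushforward_le | auto].
Qed.

Lemma pushforward_bounded (mu : functional X) C : inhabited X -> SMplus X mu ->
  bounded_by X C mu -> bounded_by X C (pushforward X U f mu).
Proof.
  intros [x0] Hmu HC phi Hphi M HM.
  assert (Hpb : forall x, - M <= pullback X U f phi x <= M)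
    by (intros x; apply Rabs_le_between, pullback_bound, HM).
  assert (HM0 : 0 <= M) by exact (Rle_trans _ _ _ (Rabs_pos _) (HM x0)).
  assert (Hup : pushforward X U f mu phi <= mu (fun _ => M)).
  { apply pushforward_le; auto using cont_const; intros x; specialize (Hpb x); lra. }
  assert (Hlo : mu (fun _ => - M) <= pushforward X U f mu phi).
  { apply pushforward_ge; [exact Hphi |]; intros psi Hpsi Hge.
    destruct Hmu as [_ [_ [_ Hmono]]]; apply Hmono; auto using cont_const.
    intros x; specialize (Hpb x); specialize (Hge x); lra. }
  pose proof (Rabs_le_between _ _ (HC _ (cont_const X M) M
                 ltac:(intros; rewrite Rabs_right; lra))).
  pose proof (Rabs_le_between _ _ (HC _ (cont_const X (- M)) M
                 ltac:(intros; cbv beta; rewrite Rabs_Ropp, Rabs_right; lra))).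
  apply Rabs_le; lra.
Qed.

(* Homogeneity: [pullback_scale] gives one inequality; applying it with [/ l] gives the other. *)
Lemma pushforward_SMplus (mu : functional X) : inhabited X -> SMplus X mu ->
  SMplus X (pushforward X U f mu).
Proof.
  intros Hin Hmu; pose proof Hmu as [Hsub [Hhom [[C HC] Hmono]]].
  assert (Hscale : forall l phi, l > 0 -> cont X phi ->
            pushforward X U f mu (fun x => l * phi x) <= l * pushforward X U f mu phi).
  { intros l phi Hl Hphi.
    enough (/ l * pushforward X U f mu (fun x => l * phi x) <= pushforward X U f mu phi).
    { apply (Rmult_le_compat_l l) in H; [| lra].
      rewrite <- Rmult_assoc, Rinv_r, Rmult_1_l in H; lra. }
    apply pushforward_ge; [exact Hphi |]; intros psi Hpsi Hge.
    rewrite <- (Rmult_1_l (mu psi)), <- (Rinv_l l), Rmult_assoc by lra.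
    apply Rmult_le_compat_l; [left; now apply Rinv_0_lt_compat |].
    rewrite <- Hhom by (auto; lra).
    apply pushforward_le; auto using cont_scal; intros x.
    pose proof (pullback_scale l phi x Hl Hphi); specialize (Hge x); nra. }
  pose proof (pushforward_bounded mu C Hin Hmu HC) as HpC.
  split; [| split; [| split]].
  - intros p q Hp Hq.
    enough (pushforward X U f mu (fun x => p x + q x) - pushforward X U f mu p
            <= pushforward X U f mu q) by lra.
    apply pushforward_ge; [exact Hq |]; intros psi2 Hpsi2 Hge2.
    enough (pushforward X U f mu (fun x => p x + q x) - mu psi2
            <= pushforward X U f mu p) by lra.
    apply pushforward_ge; [exact Hp |]; intros psi1 Hpsi1 Hge1.
    enough (pushforward X U f mu (fun x => p x + q x) <= mu (fun x => psi1 x + psi2 x))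
      by (pose proof (Hsub psi1 psi2 Hpsi1 Hpsi2); lra).
    apply pushforward_le; auto using cont_plus; intros x.
    pose proof (pullback_add p q x Hp Hq); specialize (Hge1 x); specialize (Hge2 x); lra.
  - intros l phi Hl Hphi; destruct (Rle_lt_or_eq_dec 0 l) as [Hlt | <-]; [lra | |].
    + apply Rle_antisym; [now apply Hscale |].
      pose proof (Hscale (/ l) (fun x => l * phi x) (Rinv_0_lt_compat _ Hlt)
                    (cont_scal X l phi Hphi)) as H; cbv beta in H.
      replace (fun x => / l * (l * phi x)) with phi in H
        by (apply functional_extensionality; intros; field; lra).
      apply (Rmult_le_compat_l l) in H; [| lra].
      rewrite <- Rmult_assoc, Rinv_r, Rmult_1_l in H; lra.
    + rewrite Rmult_0_l.
      pose proof (HpC (fun x => 0 * phi x) (cont_scal X 0 phi Hphi) 0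
                    ltac:(intros; cbv beta; rewrite Rmult_0_l, Rabs_R0; lra)) as H.
      rewrite Rmult_0_r in H; apply Rabs_le_between in H; lra.
  - now exists C.
  - intros p q Hp Hq Hpq; apply pushforward_ge; [exact Hq |]; intros psi Hpsi Hge.
    apply pushforward_le; auto; intros x.
    pose proof (pullback_mono p q x Hp Hq Hpq); specialize (Hge x); lra.
Qed.

Lemma push_iter_succ n (mu0 : functional X) :
  push_iter X U f (S n) mu0 = pushforward X U f (push_iter X U f n mu0).
Proof. reflexivity. Qed.

Lemma push_iter_SMplus (mu0 : functional X) C n : inhabited X -> SMplus X mu0 ->
  bounded_by X C mu0 ->
  SMplus X (push_iter X U f n mu0) /\ bounded_by X C (push_iter X U f n mu0).
Proof.
  intros Hin Hmu0 HC; induction n as [| n [IH1 IH2]]; [now split |].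
  rewrite push_iter_succ; split; [now apply pushforward_SMplus | now apply pushforward_bounded].
Qed.

End Pushforward.

Section SubmeasureLimits.
Variable X : CompactMetricSpace.

Lemma bounded_by_limit (nu : nat -> functional X) (mu : functional X) C :
  (forall n, bounded_by X C (nu n)) ->
  (forall phi, cont X phi -> Un_cv (fun n => nu n phi) (mu phi)) -> bounded_by X C mu.
Proof.
  intros HC Hcv phi Hphi M HM.
  pose proof (fun n => Rabs_le_between _ _ (HC n phi Hphi M HM)) as Hn.
  apply Rabs_le; split.
  - apply (Rle_cv_lim (Un := fun _ => - (C * M)) (Vn := fun n => nu n phi));
      [apply Hn | apply Un_cv_const | auto].
  - apply (Rle_cv_lim (Un := fun n => nu n phi) (Vn := fun _ => C * M));
      [apply Hn | auto | apply Un_cv_const].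
Qed.

Lemma SMplus_limit (nu : nat -> functional X) (mu : functional X) C :
  (forall n, SMplus X (nu n) /\ bounded_by X C (nu n)) ->
  (forall phi, cont X phi -> Un_cv (fun n => nu n phi) (mu phi)) -> SMplus X mu.
Proof.
  intros Hnu Hcv; split; [| split; [| split]].
  - intros p q Hp Hq.
    apply (Rle_cv_lim (Un := fun n => nu n (fun x => p x + q x))
                      (Vn := fun n => nu n p + nu n q)).
    + intros n; apply (proj1 (Hnu n)); auto.
    + apply Hcv, cont_plus; auto.
    + apply CV_plus; auto.
  - intros l p Hl Hp; apply (UL_sequence (fun n => nu n (fun x => l * p x))).
    + apply Hcv, cont_scal, Hp.
    + replace (fun n => nu n (fun x => l * p x)) with (fun n => l * nu n p)
        by (apply functional_extensionality; intros n; symmetry; apply (proj1 (Hnu n)); auto).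
      apply CV_mult; [apply Un_cv_const | auto].
  - exists C; apply (bounded_by_limit nu); [intros n; apply Hnu | exact Hcv].
  - intros p q Hp Hq Hpq.
    apply (Rle_cv_lim (Un := fun n => nu n p) (Vn := fun n => nu n q)); auto.
    intros n; apply (proj1 (Hnu n)); auto.
Qed.

Definition seq_inf (nu : nat -> functional X) : functional X :=
  fun phi => Rinf (fun r => exists n, r = nu n phi).

Lemma is_glb_seq_inf (nu : nat -> functional X) C phi :
  (forall n, bounded_by X C (nu n)) -> cont X phi ->
  is_glb (fun r => exists n, r = nu n phi) (seq_inf nu phi).
Proof.
  intros HC Hphi; apply is_glb_Rinf; [now exists (nu 0%nat phi), 0%nat |].
  destruct (cont_bounded X phi Hphi) as [M HM].
  exists (- (C * M)); intros r [n ->]; exact (proj1 (Rabs_le_between _ _ (HC n phi Hphi M HM))).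
Qed.

Lemma seq_inf_cv (nu : nat -> functional X) C phi :
  (forall n, bounded_by X C (nu n)) -> (forall n, mle X (nu (S n)) (nu n)) -> cont X phi ->
  Un_cv (fun n => nu n phi) (seq_inf nu phi).
Proof.
  intros HC Hdec Hphi eps Heps.
  pose proof (is_glb_seq_inf nu C phi HC Hphi) as Hglb.
  destruct (glb_approx _ _ eps Hglb Heps) as [r [[N ->] HN]].
  exists N; intros n Hn; unfold R_dist.
  pose proof (glb_lower _ _ (nu n phi) Hglb (ex_intro _ n eq_refl)).
  pose proof (decreasing_prop (fun k => nu k phi) N n (fun k => Hdec k phi Hphi) Hn).
  rewrite Rabs_right; lra.
Qed.

Definition family_sup (D : functional X -> Prop) : functional X :=
  fun phi => Rsup (fun r => exists mu, D mu /\ r = mu phi).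

Section FamilySup.
Variable D : functional X -> Prop.
Variable C : R.
Variable mu1 : functional X.
Hypothesis D_mu1 : D mu1.
Hypothesis D_SMplus : forall mu, D mu -> SMplus X mu /\ bounded_by X C mu.

Lemma is_lub_family_sup phi : cont X phi ->
  is_lub (fun r => exists mu, D mu /\ r = mu phi) (family_sup D phi).
Proof.
  intros Hphi; apply is_lub_Rsup; [now exists (mu1 phi), mu1 |].
  destruct (cont_bounded X phi Hphi) as [M HM]; exists (C * M).
  intros r [mu [Hmu ->]].
  exact (proj2 (Rabs_le_between _ _ (proj2 (D_SMplus mu Hmu) phi Hphi M HM))).
Qed.

Lemma le_family_sup mu : D mu -> mle X mu (family_sup D).
Proof.
  intros Hmu phi Hphi; apply (lub_upper _ _ _ (is_lub_family_sup phi Hphi)).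
  now exists mu.
Qed.

Lemma family_sup_le phi c : cont X phi -> (forall mu, D mu -> mu phi <= c) ->
  family_sup D phi <= c.
Proof.
  intros Hphi Hc; apply (lub_least _ _ _ (is_lub_family_sup phi Hphi)).
  intros r [mu [Hmu ->]]; auto.
Qed.

Lemma family_sup_bounded : bounded_by X C (family_sup D).
Proof.
  intros phi Hphi M HM; apply Rabs_le; split.
  - apply Rle_trans with (mu1 phi); [| now apply le_family_sup].
    exact (proj1 (Rabs_le_between _ _ (proj2 (D_SMplus mu1 D_mu1) phi Hphi M HM))).
  - apply family_sup_le; [exact Hphi |]; intros mu Hmu.
    exact (proj2 (Rabs_le_between _ _ (proj2 (D_SMplus mu Hmu) phi Hphi M HM))).
Qed.

Lemma family_sup_SMplus : SMplus X (family_sup D).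
Proof.
  split; [| split; [| split]].
  - intros p q Hp Hq; apply family_sup_le; [now apply cont_plus |]; intros mu Hmu.
    destruct (D_SMplus mu Hmu) as [[Hsub _] _].
    pose proof (le_family_sup mu Hmu p Hp); pose proof (le_family_sup mu Hmu q Hq).
    specialize (Hsub p q Hp Hq); lra.
  - intros l p Hl Hp; pose proof (cont_scal X l p Hp) as Hlp.
    assert (Hhom : forall mu, D mu -> mu (fun x => l * p x) = l * mu p)
      by (intros mu Hmu; apply (proj1 (proj2 (proj1 (D_SMplus mu Hmu)))); auto).
    apply Rle_antisym.
    + apply family_sup_le; [exact Hlp |]; intros mu Hmu; rewrite (Hhom mu Hmu).
      apply Rmult_le_compat_l; [lra | now apply le_family_sup].
    + destruct (Rle_lt_or_eq_dec 0 l) as [Hlt | <-]; [lra | |].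
      * enough (family_sup D p <= / l * family_sup D (fun x => l * p x)).
        { apply (Rmult_le_compat_l l) in H; [| lra].
          rewrite <- Rmult_assoc, Rinv_r, Rmult_1_l in H; lra. }
        apply family_sup_le; [exact Hp |]; intros mu Hmu.
        rewrite <- (Rmult_1_l (mu p)), <- (Rinv_l l), Rmult_assoc, <- (Hhom mu Hmu) by lra.
        apply Rmult_le_compat_l; [left; now apply Rinv_0_lt_compat |].
        now apply le_family_sup.
      * rewrite Rmult_0_l; apply Rle_trans with (mu1 (fun x => 0 * p x)).
        -- rewrite (Hhom mu1 D_mu1); lra.
        -- now apply le_family_sup.
  - now exists C; apply family_sup_bounded.
  - intros p q Hp Hq Hpq; apply family_sup_le; [exact Hp |]; intros mu Hmu.
    apply Rle_trans with (mu q); [| now apply le_family_sup].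
    apply (proj2 (proj2 (proj2 (proj1 (D_SMplus mu Hmu))))); auto.
Qed.

End FamilySup.
End SubmeasureLimits.

Section Dynamics.
Variable X : CompactMetricSpace.
Variable U : X -> Prop.
Variable f : X -> X.
Hypothesis U_dense : dense_set X U.
Hypothesis X_inhabited : inhabited X.
Variable mu0 : functional X.
Variable C : R.
Hypothesis mu0_SMplus : SMplus X mu0.
Hypothesis mu0_bounded : bounded_by X C mu0.

Let iter_SMplus_bounded n :=
  push_iter_SMplus X U f U_dense mu0 C n X_inhabited mu0_SMplus mu0_bounded.
Let iter_SMplus n : SMplus X (push_iter X U f n mu0) := proj1 (iter_SMplus_bounded n).

(* Since [(f_* )^(j+1) mu0 phi <= (f_* )^j mu0 psi], the difference of the Cesaro sums
   telescopes to [mu0 phi - (f_* )^(n+1) mu0 phi]. At [n = 0] both sides are [0],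
   as [/ 0 = 0]. *)
Lemma cesaro_defect n phi psi M :
  cont X phi -> cont X psi -> (forall x, psi x >= pullback X U f phi x) ->
  (forall x, Rabs (phi x) <= M) ->
  cesaro X U f mu0 n phi - cesaro X U f mu0 n psi <= 2 * C * M * / INR n.
Proof.
  intros Hphi Hpsi Hge HM; unfold cesaro.
  set (nu := fun j => push_iter X U f j mu0).
  assert (Hbound : forall j, - (C * M) <= nu j phi <= C * M)
    by (intros j; apply Rabs_le_between, (proj2 (iter_SMplus_bounded j)); auto).
  assert (Hshift : sum_f_R0 (fun j => nu (S j) phi) n <= sum_f_R0 (fun j => nu j psi) n).
  { apply sum_Rle; intros j _; unfold nu; rewrite push_iter_succ.
    apply (pushforward_le X U f U_dense); auto. }
  assert (Htelescope : sum_f_R0 (fun j => nu (S j) phi) n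
                       = sum_f_R0 (fun j => nu j phi) n + nu (S n) phi - nu 0%nat phi).
  { pose proof (decomp_sum (fun j => nu j phi) (S n) (Nat.lt_0_succ n)) as H.
    rewrite tech5 in H; simpl Init.Nat.pred in H; lra. }
  rewrite <- Rmult_minus_distr_l, Rmult_comm.
  apply Rmult_le_compat_r; [apply Rinv_INR_nonneg |].
  pose proof (Hbound 0%nat); pose proof (Hbound (S n)); unfold nu in *; lra.
Qed.

Lemma cesaro_cluster_le_pushforward mu :
  weak_cluster X (cesaro X U f mu0) mu -> mle X mu (pushforward X U f mu).
Proof.
  intros [s [Hs [_ Hcv]]] phi Hphi.
  destruct (cont_bounded X phi Hphi) as [M HM].
  apply (pushforward_ge X U f U_dense); [exact Hphi |]; intros psi Hpsi Hge.
  pose proof (CV_mult _ _ _ _ (Un_cv_const (2 * C * M))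
                (cv_infty_cv_0 _ (cv_infty_INR_subseq s Hs))) as Hdefect_cv.
  rewrite Rmult_0_r in Hdefect_cv.
  enough (mu phi - mu psi <= 0) by lra.
  refine (Rle_cv_lim _ (CV_minus _ _ _ _ (Hcv phi Hphi) (Hcv psi Hpsi)) Hdefect_cv).
  intros n; now apply (cesaro_defect (s n) phi psi M).
Qed.

Section Decreasing.
Hypothesis mu0_superinvariant : mle X (pushforward X U f mu0) mu0.

Let nu n := push_iter X U f n mu0.

Lemma push_iter_decreasing n : mle X (nu (S n)) (nu n).
Proof.
  induction n as [| n IH]; [exact mu0_superinvariant |].
  apply (pushforward_mono X U f U_dense); [exact (iter_SMplus (S n)) | exact IH].
Qed.

Let nu_bounded n : bounded_by X C (nu n) := proj2 (iter_SMplus_bounded n).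

Lemma seq_inf_push_iter_fixed : meq X (pushforward X U f (seq_inf X nu)) (seq_inf X nu).
Proof.
  pose proof (fun phi => is_glb_seq_inf X nu C phi nu_bounded) as Hglb.
  assert (Hinf_SM : SMplus X (seq_inf X nu))
    by (apply (SMplus_limit X nu _ C iter_SMplus_bounded); intros phi Hphi;
        exact (seq_inf_cv X nu C phi nu_bounded push_iter_decreasing Hphi)).
  intros phi Hphi; apply Rle_antisym.
  - apply (glb_greatest _ _ _ (Hglb phi Hphi)); intros r [n ->].
    apply Rle_trans with (nu (S n) phi); [| apply push_iter_decreasing; exact Hphi].
    apply (pushforward_mono X U f U_dense); [exact Hinf_SM | | exact Hphi].
    intros q Hq; apply (glb_lower _ _ _ (Hglb q Hq)); now exists n.
  - apply (pushforward_ge X U f U_dense); [exact Hphi |]; intros psi Hpsi Hge.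
    apply (glb_greatest _ _ _ (Hglb psi Hpsi)); intros r [n ->].
    apply Rle_trans with (nu (S n) phi).
    + apply (glb_lower _ _ _ (Hglb phi Hphi)); now exists (S n).
    + apply (pushforward_le X U f U_dense); auto; exact (iter_SMplus n).
Qed.

Lemma push_iter_cv_greatest_fixed :
  exists mu_inf, SMplus X mu_inf /\
    weak_conv X (fun n => push_iter X U f n mu0) mu_inf /\
    mle X mu_inf mu0 /\ meq X (pushforward X U f mu_inf) mu_inf /\
    forall mu, SMplus X mu -> mle X mu mu0 -> meq X (pushforward X U f mu) mu ->
      mle X mu mu_inf.
Proof.
  pose proof (fun phi => seq_inf_cv X nu C phi nu_bounded push_iter_decreasing) as Hcv.
  exists (seq_inf X nu); split; [| split; [| split; [| split]]].
  - exact (SMplus_limit X nu _ C iter_SMplus_bounded Hcv).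
  - split; [exists C; exact nu_bounded | exact Hcv].
  - intros phi Hphi; apply (glb_lower _ _ _ (is_glb_seq_inf X nu C phi nu_bounded Hphi)).
    now exists 0%nat.
  - exact seq_inf_push_iter_fixed.
  - intros mu Hmu Hmu_le Hfix.
    assert (Hbelow : forall n, mle X mu (nu n)).
    { induction n as [| n IH]; [exact Hmu_le |].
      intros phi Hphi; rewrite <- (Hfix phi Hphi).
      apply (pushforward_mono X U f U_dense); auto. }
    intros phi Hphi; apply (glb_greatest _ _ _ (is_glb_seq_inf X nu C phi nu_bounded Hphi)).
    intros r [n ->]; now apply Hbelow.
Qed.

End Decreasing.

Section Increasing.
Hypothesis mu0_subinvariant : mle X mu0 (pushforward X U f mu0).

Definition below_fixed_points (mu : functional X) : Prop :=
  SMplus X mu /\ bounded_by X C mu /\ mle X mu0 mu /\ mle X mu (pushforward X U f mu) /\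
  forall nu, SMplus X nu -> mle X mu0 nu -> meq X (pushforward X U f nu) nu -> mle X mu nu.

Lemma below_fixed_points_mu0 : below_fixed_points mu0.
Proof.
  split; [exact mu0_SMplus |]; split; [exact mu0_bounded |].
  split; [intros phi _; lra |]; split; [exact mu0_subinvariant |].
  now intros nu _ Hle _.
Qed.

Lemma below_fixed_points_SMplus mu :
  below_fixed_points mu -> SMplus X mu /\ bounded_by X C mu.
Proof. now intros [HSM [HC _]]. Qed.

Lemma least_fixed_point_above :
  exists mu_min, SMplus X mu_min /\
    mle X mu0 mu_min /\ meq X (pushforward X U f mu_min) mu_min /\
    forall mu, SMplus X mu -> mle X mu0 mu -> meq X (pushforward X U f mu) mu ->
      mle X mu_min mu.
Proof.
  set (m := family_sup X below_fixed_points).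
  pose proof (family_sup_SMplus X _ C mu0 below_fixed_points_mu0 below_fixed_points_SMplus)
    as Hm_SM.
  pose proof (le_family_sup X _ C mu0 below_fixed_points_mu0 below_fixed_points_SMplus)
    as Hm_upper.
  pose proof (family_sup_le X _ C mu0 below_fixed_points_mu0 below_fixed_points_SMplus)
    as Hm_least.
  pose proof (family_sup_bounded X _ C mu0 below_fixed_points_mu0 below_fixed_points_SMplus)
    as Hm_bounded.
  assert (Hm0 : mle X mu0 m) by exact (Hm_upper mu0 below_fixed_points_mu0).
  assert (Hm_sub : mle X m (pushforward X U f m)).
  { intros phi Hphi; apply Hm_least; [exact Hphi |].
    intros mu Hmu; pose proof Hmu as [HSM [_ [_ [Hsub _]]]].
    apply Rle_trans with (pushforward X U f mu phi); auto.
    apply (pushforward_mono X U f U_dense); auto. }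
  assert (Hm_below : forall nu, SMplus X nu -> mle X mu0 nu ->
            meq X (pushforward X U f nu) nu -> mle X m nu).
  { intros nu Hnu Hnu0 Hfix phi Hphi; apply Hm_least; [exact Hphi |].
    intros mu [_ [_ [_ [_ Hleast]]]]; now apply Hleast. }
  assert (Hpush_m : below_fixed_points (pushforward X U f m)).
  { split; [now apply (pushforward_SMplus X U f U_dense) |].
    split; [now apply (pushforward_bounded X U f U_dense) |].
    split; [intros phi Hphi; apply Rle_trans with (m phi); auto |].
    split; [now apply (pushforward_mono X U f U_dense) |].
    intros nu Hnu Hnu0 Hfix phi Hphi; rewrite <- (Hfix phi Hphi).
    apply (pushforward_mono X U f U_dense); auto. }
  exists m; split; [exact Hm_SM |]; split; [exact Hm0 |]; split; [| exact Hm_below].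
  intros phi Hphi; apply Rle_antisym; [now apply (Hm_upper _ Hpush_m) | now apply Hm_sub].
Qed.

End Increasing.
End Dynamics.

Lemma mnonzero_inhabited (X : CompactMetricSpace) (mu : functional X) :
  SMplus X mu -> mnonzero X mu -> inhabited X.
Proof.
  intros [_ [Hhom _]] [phi [Hphi Hne]]; apply NNPP; intros Hempty; apply Hne.
  assert (Hphi0 : phi = fun x => 0 * phi x)
    by (apply functional_extensionality; intros x; exfalso; apply Hempty; now constructor).
  rewrite Hphi0, Hhom by (auto; lra); ring.
Qed.

Theorem theorem1p4 (X : CompactMetricSpace) (U : X -> Prop) (f : X -> X)
  (mu0 : functional X) :
  open_dense_map X U f -> SMplus X mu0 -> mnonzero X mu0 ->
  (forall mu : functional X, weak_cluster X (cesaro X U f mu0) mu ->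
     mle X mu (pushforward X U f mu)) /\
  (mle X (pushforward X U f mu0) mu0 ->
     exists mu_inf, SMplus X mu_inf /\
       weak_conv X (fun n => push_iter X U f n mu0) mu_inf /\
       mle X mu_inf mu0 /\ meq X (pushforward X U f mu_inf) mu_inf /\
       forall mu, SMplus X mu -> mle X mu mu0 -> meq X (pushforward X U f mu) mu ->
         mle X mu mu_inf) /\
  (mle X mu0 (pushforward X U f mu0) ->
     exists mu_min, SMplus X mu_min /\
       mle X mu0 mu_min /\ meq X (pushforward X U f mu_min) mu_min /\
       forall mu, SMplus X mu -> mle X mu0 mu -> meq X (pushforward X U f mu) mu ->
         mle X mu_min mu).
Proof.
  intros [_ [U_dense _]] Hmu0 Hnz.
  pose proof (mnonzero_inhabited X mu0 Hmu0 Hnz) as Hin.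
  pose proof Hmu0 as [_ [_ [[C HC] _]]].
  split; [| split].
  - exact (cesaro_cluster_le_pushforward X U f U_dense Hin mu0 C Hmu0 HC).
  - exact (push_iter_cv_greatest_fixed X U f U_dense Hin mu0 C Hmu0 HC).
  - exact (least_fixed_point_above X U f U_dense Hin mu0 C Hmu0 HC).
Qed.
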